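(* Let $M=(\mathbf{D},\mathbf{I},\Sigma,\sim)$ be a model, $\sigma_1\in\Sigma$, $\alpha\in\mathcal{L}_{\mathsf{B}}$ and $z\in\{x,y\}$. Then $$M,\sigma_1\models \bigwedge_{\mathcal{T}\subseteq Cons}\Big(Rz=\mathcal{T}\to \bigwedge_{c\in \mathcal{T}}\alpha[c/z]\Big)$$ iff for all $\sigma_2\in\mathsf{R}^z(\sigma_1)$, $M',\sigma_2\models\alpha$, where $M'=(\mathbf{D},\mathbf{I},\Sigma',\sim')$ is the update of $M$ associated to $\sigma_2$ induced by $[z]$.
   Context: Vocabulary: $Pred$ set of predicate symbols with arities containing a binary symbol $R$; $Cons$ nonempty finite set of constants; $Var=\{x,y\}$; terms are elements of $Cons\cup Var$. $\mathcal{L}_{\mathsf{B}}$: $\alpha::=P(t_1,\dots,t_m)\mid t_1\equiv t_2\mid\neg\alpha\mid(\alpha\land\alpha)$. $\alpha[c/z]$ is the result of replacing every occurrence of $z$ in $\alpha$ by $c$. For $\mathcal{T}\subseteq Cons$ and a term $u$, $Ru=\mathcal{T}:=\bigwedge_{t\in\mathcal{T}}Rut\land\bigwedge_{t\in Cons\setminus\mathcal{T}}\neg Rut$. A model is $M=(\mathbf{D},\mathbf{I},\Sigma,\sim)$: $\mathbf{D}$ nonempty finite; $\mathbf{I}(P)\subseteq\mathbf{D}^m$ for $m$-ary $P$, with $\mathbf{R}:=\mathbf{I}(R)$ serial; $\mathbf{I}(c)\in\mathbf{D}$ for $c\in Cons$, every element of $\mathbf{D}$ being some $\mathbf{I}(c)$;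 $\Sigma\subseteq\mathbf{D}^{Var}$ nonempty set of assignments (situations); $\sim_x,\sim_y$ equivalence relations on $\Sigma$. Semantics of $\mathcal{L}_{\mathsf{B}}$: with $t^{(\mathbf{I},\sigma)}=\mathbf{I}(t)$ for constants, $\sigma(t)$ for variables, $M,\sigma\models P(t_1,\dots,t_m)$ iff $(t_1^{(\mathbf{I},\sigma)},\dots,t_m^{(\mathbf{I},\sigma)})\in\mathbf{I}(P)$, $M,\sigma\models t_1\equiv t_2$ iff the values are equal, Boolean clauses standard. Fix a natural number $k$ (the sight). For $s\in\mathbf{D}$: $\mathbb{D}^0(s)=\{s\}$, $\mathbb{D}^{m+1}(s)=\mathbb{D}^m(s)\cup\{t:\exists u\in\mathbb{D}^m(s),(u,t)\in\mathbf{R}\text{ or }(t,u)\in\mathbf{R}\}$. For $\sigma,\sigma'\in\mathbf{D}^{Var}$, $\mathsf{R}^z\sigma\sigma'$ iff $(\sigma(z),\sigma'(z))\in\mathbf{R}$ and $\sigma(z')=\sigma'(z')$ for the other variable $z'$; $\mathsf{R}^z(\Gamma)=\{\sigma':\exists\sigma\in\Gamma,\mathsf{R}^z\sigma\sigma'\}$, $\mathsf{R}^z(\sigma)=\mathsf{R}^z(\{\sigma\})$; $\Sigma|\sigma=\{\sigma'\in\Sigma:\sigma\sim_w\sigma'\text{ for some }w\in Var\}$. For $\sigma_2\in\mathsf{R}^z(\sigma_1)$, the update of $M$ associated to $\sigma_2$ induced by $[z]$ is $(\mathbf{D},\mathbf{I},\Sigma',\sim')$ with $\Sigma'=\{\sigma_2\}$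 if $\sigma_2(x)\in\mathbb{D}^k(\sigma_2(y))$, and otherwise $\Sigma'=\{\sigma'\in\mathsf{R}^z(\Sigma|\sigma_1):\sigma'(x)\notin\mathbb{D}^k(\sigma'(y))\}$; and $\sigma'_1\sim'_w\sigma'_2$ iff $\sigma'_1(w)=\sigma'_2(w)$, for $w\in Var$. *)

From mathcomp Require Import all_boot.
Set Implicit Arguments. Unset Strict Implicit. Unset Printing Implicit Defensive.

Record vocab := Vocab {
  Pred : Type;
  ar : Pred -> nat;
  Rsym : Pred;
  ar_R : ar Rsym = 2
}.

Inductive Var := vx | vy.

Definition other (z : Var) : Var := match z with vx => vy | vy => vx end.

Inductive term (Cons : Type) := TCons of Cons | TVar of Var.
Arguments TVar {Cons}.

Inductive formula (V : vocab) (Cons : Type) :=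
| Atom (P : Pred V) of (ar P).-tuple (term Cons)
| Eq of term Cons & term Cons
| Neg of formula V Cons
| And of formula V Cons & formula V Cons.

Arguments Atom {V Cons} P _.
Arguments Eq {V Cons} _ _.
Arguments Neg {V Cons} _.
Arguments And {V Cons} _ _.

Section Syntax.
Variables (V : vocab) (Cons : finType).

Definition Top : formula V Cons := Eq (TVar vx) (TVar vx).
Definition Imp (a b : formula V Cons) : formula V Cons := Neg (And a (Neg b)).
Definition bigAnd (s : seq (formula V Cons)) : formula V Cons :=
  foldr And Top s.

Definition Ratom (u t : term Cons) : formula V Cons :=
  Atom (Rsym V) (tcast (esym (ar_R V)) [tuple u; t]).

Definition Req (u : term Cons) (T : {set Cons}) : formula V Cons :=
  bigAnd ([seq Ratom u (TCons c) | c <- enum T] ++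
          [seq Neg (Ratom u (TCons c)) | c <- enum (~: T)]).

Definition tsubst (c : Cons) (z : Var) (t : term Cons) : term Cons :=
  match t with
  | TVar v => match v, z with
              | vx, vx | vy, vy => TCons c
              | _, _ => t end
  | TCons _ => t
  end.

Fixpoint subst (a : formula V Cons) (c : Cons) (z : Var) : formula V Cons :=
  match a with
  | Atom P ts => Atom P (map_tuple (tsubst c z) ts)
  | Eq t1 t2 => Eq (tsubst c z t1) (tsubst c z t2)
  | Neg b => Neg (subst b c z)
  | And b1 b2 => And (subst b1 c z) (subst b2 c z)
  end.

Definition box_formula (a : formula V Cons) (z : Var) : formula V Cons :=
  bigAnd [seq Imp (Req (TVar z) T) (bigAnd [seq subst a c z | c <- enum T])
         | T <- enum [set: {set Cons}]].

End Syntax.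

Record premodel (V : vocab) (Cons : finType) := PreModel {
  D : finType;
  IP : forall P : Pred V, (ar P).-tuple D -> Prop;
  Ic : Cons -> D;
  Sigma : (Var -> D) -> Prop;
  sim : Var -> (Var -> D) -> (Var -> D) -> Prop
}.

Arguments D {V Cons} p.
Arguments IP {V Cons} p P _.
Arguments Ic {V Cons} p _.
Arguments Sigma {V Cons} p _.
Arguments sim {V Cons} p _ _ _.

Section Models.
Variables (V : vocab) (Cons : finType).
Implicit Type M : premodel V Cons.

Definition Rrel M (d e : D M) : Prop :=
  IP M (Rsym V) (tcast (esym (ar_R V)) [tuple d; e]).

Definition is_model M : Prop :=
  [/\ inhabited (D M),
      (forall d : D M, exists c, Ic M c = d),
      (forall d : D M, exists e, Rrel d e),
      (exists s, Sigma M s) &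
      (forall w : Var,
          (forall s, Sigma M s -> sim M w s s) /\
          (forall s t, Sigma M s -> Sigma M t -> sim M w s t -> sim M w t s) /\
          (forall s t u, Sigma M s -> Sigma M t -> Sigma M u ->
               sim M w s t -> sim M w t u -> sim M w s u))].

Definition teval M (s : Var -> D M) (t : term Cons) : D M :=
  match t with TCons c => Ic M c | TVar v => s v end.

Fixpoint sat M (s : Var -> D M) (a : formula V Cons) : Prop :=
  match a with
  | Atom P ts => IP M P (map_tuple (teval s) ts)
  | Eq t1 t2 => teval s t1 = teval s t2
  | Neg b => ~ sat s b
  | And b1 b2 => sat s b1 /\ sat s b2
  end.

Fixpoint Dk M (m : nat) (s : D M) : D M -> Prop :=
  match m with
  | 0 => fun t => t = s
  | m'.+1 => fun t => Dk m' s t \/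
                      exists u, Dk m' s u /\ (Rrel u t \/ Rrel t u)
  end.

Definition Rz M (z : Var) (s s' : Var -> D M) : Prop :=
  Rrel (s z) (s' z) /\ s (other z) = s' (other z).

Definition Sigma_restr M (s : Var -> D M) (s' : Var -> D M) : Prop :=
  Sigma M s' /\ exists w, sim M w s s'.

(* the update of M associated to sigma2 induced by [z] (sight k) *)
Definition update (k : nat) M (s1 : Var -> D M) (z : Var) (s2 : Var -> D M)
  : premodel V Cons :=
  @PreModel V Cons (D M) (IP M) (Ic M)
    (fun s => (Dk k (s2 vy) (s2 vx) /\ s = s2) \/
              (~ Dk k (s2 vy) (s2 vx) /\
               (exists s0, Sigma_restr s1 s0 /\ Rz z s0 s) /\
               ~ Dk k (s vy) (s vx)))
    (fun w s t => s w = t w).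

End Models.

From mathcomp Require Import all_boot.
From Stdlib Require Import Classical ClassicalDescription FunctionalExtensionality.

(* The truth of a formula at a situation only involves the interpretation
   (D, I), never Sigma or ~, so the update M' is irrelevant on the right-hand
   side.  On the left, the conjunct for T = the set of R-successors of z is the
   only one whose antecedent holds, so the box formula says that alpha holds at
   every assignment moving z to an R-successor named by a constant; since
   every element is named, these are exactly the R^z-successors of sigma_1. *)

Section Satisfaction.
Variables (V : vocab) (Cons : finType) (M : premodel V Cons).
Implicit Types (s : Var -> D M) (a : formula V Cons).

Lemma sat_bigAnd_cat s (l1 l2 : seq (formula V Cons)) :
  sat s (bigAnd (l1 ++ l2)) <-> sat s (bigAnd l1) /\ sat s (bigAnd l2).
Proof.
elim: l1 => [|b l IH] /=; first by split; [split | case].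
by rewrite IH; tauto.
Qed.

Lemma sat_bigAnd_map s (T : eqType) (f : T -> formula V Cons) (l : seq T) :
  sat s (bigAnd (map f l)) <-> (forall t, t \in l -> sat s (f t)).
Proof.
elim: l => [|u l IH] /=; first by split.
rewrite IH; split.
- by case=> fu fl t; rewrite in_cons => /orP[/eqP-> | /fl].
- move=> fl; split=> [|t lt]; apply: fl; first exact: mem_head.
  by rewrite in_cons lt orbT.
Qed.

Lemma sat_Imp s a b : sat s (Imp a b) <-> (sat s a -> sat s b).
Proof.
split=> [nab sa | ab [sa nb]]; last exact: nb (ab sa).
by apply: NNPP => nb; apply: nab.
Qed.

Lemma sat_Ratom s u t : sat s (Ratom V u t) <-> Rrel (teval s u) (teval s t).
Proof.
rewrite /= /Rrel.
suff -> : map_tuple (teval s) (tcast (esym (ar_R V)) [tuple u; t])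
          = tcast (esym (ar_R V)) [tuple teval s u; teval s t] by [].
by apply: val_inj; rewrite /= !val_tcast.
Qed.

Lemma sat_Req s u (T : {set Cons}) :
  sat s (Req V u T) <-> (forall c, c \in T <-> Rrel (teval s u) (Ic M c)).
Proof.
rewrite /Req sat_bigAnd_cat !sat_bigAnd_map; split.
- case=> inT notinT c; split=> [cT | R_uc].
    by have := inT c; rewrite mem_enum => /(_ cT) /sat_Ratom.
  apply: NNPP => /negP cT; apply: (notinT c); last exact/sat_Ratom.
  by rewrite mem_enum in_setC.
- move=> T_R; split=> c; rewrite mem_enum ?in_setC => cT.
    exact/sat_Ratom/T_R.
  by move=> /sat_Ratom /T_R; apply/negP.
Qed.

Lemma sat_Req_exists s u : exists T : {set Cons}, sat s (Req V u T).
Proof.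
pose P c := Rrel (teval s u) (Ic M c).
exists [set c | if excluded_middle_informative (P c) then true else false].
apply/sat_Req => c; rewrite inE.
by case: excluded_middle_informative.
Qed.

Definition assign s (z : Var) (d : D M) : Var -> D M :=
  fun v => match v, z with vx, vx | vy, vy => d | _, _ => s v end.

Lemma teval_tsubst s c z t :
  teval s (tsubst c z t) = teval (assign s z (Ic M c)) t.
Proof. by case: t => [d | [] ] //; case: z. Qed.

Lemma sat_subst s a c z : sat s (subst a c z) <-> sat (assign s z (Ic M c)) a.
Proof.
elim: a => [P ts | t1 t2 | b IH | b1 IH1 b2 IH2] /=.
- suff -> : map_tuple (teval s) (map_tuple (tsubst c z) ts)
            = map_tuple (teval (assign s z (Ic M c))) ts by [].
  apply: val_inj; rewrite /= -map_comp; apply: eq_map => t /=.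
  exact: teval_tsubst.
- by rewrite !teval_tsubst.
- by rewrite IH.
- by rewrite IH1 IH2.
Qed.

Lemma sat_box_formula s a z :
  sat s (box_formula a z) <->
  (forall c, Rrel (s z) (Ic M c) -> sat (assign s z (Ic M c)) a).
Proof.
rewrite /box_formula sat_bigAnd_map; split.
- move=> box c R_zc; have [T ReqT] := sat_Req_exists s (TVar z).
  have cT : c \in T by move/sat_Req: (ReqT) => /(_ c) /iffRL; apply.
  have := box T; rewrite mem_enum in_setT => /(_ isT) /sat_Imp /(_ ReqT).
  by move=> /sat_bigAnd_map /(_ c); rewrite mem_enum => /(_ cT) /sat_subst.
- move=> succ T _; apply/sat_Imp => /sat_Req ReqT; apply/sat_bigAnd_map => c.
  by rewrite mem_enum => /ReqT R_zc; apply/sat_subst/succ.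
Qed.

End Satisfaction.

Arguments assign {V Cons M}.

Lemma sat_PreModel (V : vocab) (Cons : finType) (M : premodel V Cons)
    (S : (Var -> D M) -> Prop) (sm : Var -> (Var -> D M) -> (Var -> D M) -> Prop)
    (s : Var -> D M) (a : formula V Cons) :
  sat (M := PreModel (IP M) (Ic M) S sm) s a <-> sat s a.
Proof.
elim: a => [P ts | t1 t2 | b IH | b1 IH1 b2 IH2] //=.
- by rewrite IH.
- by rewrite IH1 IH2.
Qed.

Lemma Rz_assign {V : vocab} {Cons : finType} {M : premodel V Cons}
    (z : Var) (s s' : Var -> D M) :
  Rz z s s' <-> exists2 d, Rrel (s z) d & s' = assign s z d.
Proof.
rewrite /Rz; split=> [[R_z eq_o] | [d R_zd ->]].
- exists (s' z) => //; apply: functional_extensionality => v.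
  by case: v; case: z R_z eq_o.
- by case: z R_zd.
Qed.

Theorem fact5 (V : vocab) (Cons : finType) (HCons : 0 < #|Cons|) (k : nat)
  (M : premodel V Cons) (HM : is_model M)
  (s1 : Var -> D M) (Hs1 : Sigma M s1)
  (a : formula V Cons) (z : Var) :
  sat s1 (box_formula a z) <->
  (forall s2 : Var -> D M, Rz z s1 s2 -> sat (M := update k s1 z s2) s2 a).
Proof.
case: HM => _ named _ _ _.
rewrite sat_box_formula /update; split.
- move=> succ s2 /Rz_assign [d R_zd ->]; rewrite sat_PreModel.
  by have [c cd] := named d; rewrite -cd in R_zd *; apply: succ.
- move=> succ c R_zc.
  have /succ : Rz z s1 (assign s1 z (Ic M c)) by apply/Rz_assign; exists (Ic M c).
  by rewrite sat_PreModel.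
Qed.
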